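(* Let $X\subset\mathbb C^s$ be a finite nonempty set and let $A\subset\Gamma=\mathbb N_0^s$ be a finite set such that $\Pi_A$ is a degree reducing interpolation space for $X$. Let $L_A:\Pi\to\Pi_A$ be the interpolation operator, i.e. $L_Ap$ is the unique element of $\Pi_A$ with $(L_Ap)(x)=p(x)$ for all $x\in X$. Then the polynomials \[ q_\alpha(x):=x^\alpha-(L_A(\cdot)^\alpha)(x),\qquad \alpha\in\partial A, \] form an H-basis of the ideal $I_X=\{p\in\Pi:p(x)=0\ \forall x\in X\}$.
   Context: $\Pi=\mathbb C[x_1,\dots,x_s]$, $\deg$ is total degree with $\deg 0<0$. For $A\subset\Gamma$, $\Pi_A$ is the span of $x^\alpha$, $\alpha\in A$. A subspace $\mathcal P\subseteq\Pi$ is a degree reducing interpolation space for $X$ if for every $q\in\Pi$ there is exactly one $p\in\mathcal P$ with $p(x)=q(x)$ for all $x\in X$, and this $p$ satisfies $\deg p\le\deg q$. The border of a finite $A\subset\Gamma$ is $\partial A=\big(\bigcup_{j=1}^s(A+\epsilon_j)\big)\setminus A$, where $\epsilon_j$ is the $j$-th unit multiindex. A finite set $H\subset I$ of an ideal $I\subseteq\Pi$ is an H-basis of $I$ if every $q\in I$ can be written as $q=\sum_{h\in H}g_h h$ with $g_h\in\Pi$ and $\deg g_h+\deg h\le\deg q$ for all $h$ (terms with $g_h=0$ being allowed). *)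

From mathcomp Require Import all_boot all_algebra.
From mathcomp Require Import reals.
From mathcomp.real_closed Require Import complex.
From mathcomp Require Import finmap mpoly.
Set Implicit Arguments. Unset Strict Implicit. Unset Printing Implicit Defensive.
Import GRing.Theory.
Local Open Scope ring_scope.

(* total degree, with deg 0 = -1 < 0 *)
Definition deg (F : ringType) (s : nat) (p : {mpoly F[s]}) : int :=
  (msize p)%:Z - 1.

Definition evalpt (F : comRingType) (s : nat) (p : {mpoly F[s]}) (x : 'rV[F]_s) : F :=
  p.@[fun i => x ord0 i].

(* Pi_A = span of the monomials x^alpha, alpha in A *)
Definition inPi (F : ringType) (s : nat) (A : {fset 'X_{1..s}}) (p : {mpoly F[s]}) : Prop :=
  forall m, m \in msupp p -> m \in A.

Definition deg_red_interp_space (F : comRingType) (s : nat)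
  (A : {fset 'X_{1..s}}) (X : seq 'rV[F]_s) : Prop :=
  forall q : {mpoly F[s]},
    exists p : {mpoly F[s]},
      [/\ inPi A p, (forall x, x \in X -> evalpt p x = evalpt q x),
          (forall p', inPi A p' -> (forall x, x \in X -> evalpt p' x = evalpt q x) -> p' = p)
        & deg p <= deg q].

Definition border (s : nat) (A : {fset 'X_{1..s}}) : {fset 'X_{1..s}} :=
  ([fset (m + U_(j))%MM | m in A, j in 'I_s] `\` A)%fset.

Definition vanishing_ideal (F : comRingType) (s : nat) (X : seq 'rV[F]_s)
  (p : {mpoly F[s]}) : Prop :=
  forall x, x \in X -> evalpt p x = 0.

Definition is_Hbasis (F : ringType) (s : nat) (I : {mpoly F[s]} -> Prop)
  (H : seq {mpoly F[s]}) : Prop :=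
  (forall h, h \in H -> I h) /\
  forall q, I q ->
    exists g : {mpoly F[s]} -> {mpoly F[s]},
      q = \sum_(h <- undup H) g h * h /\
      forall h, h \in H -> g h != 0 -> deg (g h) + deg h <= deg q.

From mathcomp Require Import all_boot all_algebra.
From mathcomp Require Import reals.
From mathcomp.real_closed Require Import complex.
From mathcomp Require Import finmap mpoly.
From mathcomp Require Import zify ring.

Set Implicit Arguments. Unset Strict Implicit.
Import GRing.Theory.
Local Open Scope ring_scope.

(* Write q_a := x^a - L x^a. The q_a vanish on X, a polynomial of Pi_A
   vanishing on X is 0, and L does not raise degrees since Pi_A is degree
   reducing. For b outside A and its border write b = c + e_j with c outside
   A. Then q_b - x_j q_c = x_j L x^c - L x^b; replacing each monomial
   x^(d + e_j) of x_j L x^c that lies on the border by q_(d + e_j) + L x^(d + e_j)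
   leaves border polynomials of degree <= |b| plus an element of Pi_A vanishing
   on X, i.e. 0. By induction every such q_b has an H-representation of
   degree |b|. Finally p in I_X differs from the sum of p_m q_m over the
   monomials m of p outside A by an element of Pi_A vanishing on X. *)

Section Degree.
Variables (F : idomainType) (s : nat).
Implicit Types p q : {mpoly F[s]}.

Lemma deg_leE p q : (deg p <= deg q) = (msize p <= msize q)%N.
Proof. by rewrite /deg; apply/idP/idP; lia. Qed.

Lemma degD_le p q : deg (p + q) <= deg p \/ deg (p + q) <= deg q.
Proof.
rewrite /deg; have := msizeD_le p q; rewrite leq_max => /orP[h|h]; [left|right]; lia.
Qed.

Lemma degM p q : p != 0 -> q != 0 -> deg (p * q) = deg p + deg q.
Proof.
move=> p0 q0; rewrite /deg msizeM //.
have : (0 < msize p)%N by rewrite lt0n msize_poly_eq0.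
have : (0 < msize q)%N by rewrite lt0n msize_poly_eq0.
lia.
Qed.

Lemma degX (m : 'X_{1..s}) : deg ('X_[m] : {mpoly F[s]}) = mdeg m.
Proof. by rewrite /deg msizeX; lia. Qed.

Lemma deg_msupp p m : m \in msupp p -> (mdeg m)%:Z <= deg p.
Proof. by move=> /msize_mdeg_lt; rewrite /deg; lia. Qed.

End Degree.

Section HRepresentation.
Variables (F : idomainType) (s : nat) (H : seq {mpoly F[s]}).
Implicit Types p q : {mpoly F[s]}.

(* [is_Hbasis I H] asks for [Hrep H (deg q) q] for every [q] in [I]. *)
Definition Hrep (n : int) p :=
  exists g : {mpoly F[s]} -> {mpoly F[s]}, p = \sum_(h <- undup H) g h * h /\
    forall h, h \in H -> g h != 0 -> deg (g h) + deg h <= n.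

Lemma Hrep0 n : Hrep n 0.
Proof.
by exists (fun _ => 0); split=> [|h _]; rewrite ?eqxx // big1 // => h _; rewrite mul0r.
Qed.

Lemma HrepD n p q : Hrep n p -> Hrep n q -> Hrep n (p + q).
Proof.
move=> [g [-> gdeg]] [g' [-> g'deg]]; exists (fun h => g h + g' h); split.
  by rewrite -big_split /=; apply: eq_bigr => h _; rewrite mulrDl.
move=> h hH; have [g0|g0] := eqVneq (g h) 0; first by rewrite g0 add0r; apply: g'deg.
have [g'0|g'0] := eqVneq (g' h) 0; first by rewrite g'0 addr0; apply: gdeg.
have := gdeg h hH g0; have := g'deg h hH g'0.
by case: (degD_le (g h) (g' h)); lia.
Qed.

Lemma Hrep_sum n (I : Type) (r : seq I) (P : pred I) (G : I -> {mpoly F[s]}) :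
  (forall i, P i -> Hrep n (G i)) -> Hrep n (\sum_(i <- r | P i) G i).
Proof. by move=> HG; apply: big_ind => //; [apply: Hrep0 | apply: HrepD]. Qed.

Lemma Hrep_le n n' p : n <= n' -> Hrep n p -> Hrep n' p.
Proof.
by move=> le_nn' [g [-> gdeg]]; exists g; split=> // h hH /(gdeg h hH); lia.
Qed.

Lemma HrepMl n d m p : deg m <= d -> Hrep n p -> Hrep (n + d) (m * p).
Proof.
move=> degm [g [-> gdeg]]; exists (fun h => m * g h); split.
  by rewrite mulr_sumr; apply: eq_bigr => h _; rewrite mulrA.
move=> h hH; rewrite mulf_eq0 negb_or => /andP[m0 g0].
by rewrite degM //; have := gdeg h hH g0; lia.
Qed.

Lemma HrepZ n c p : Hrep n p -> Hrep n (c *: p).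
Proof.
move=> Hp; rewrite -mul_mpolyC -[n]addr0; apply: HrepMl Hp.
by rewrite /deg msizeC; case: (c != 0); lia.
Qed.

Lemma Hrep_mem n h : h \in H -> deg h <= n -> Hrep n h.
Proof.
move=> hH degh; exists (fun k => (k == h)%:R); split.
  rewrite (bigD1_seq h) ?mem_undup ?undup_uniq //= eqxx mul1r big1 ?addr0 //.
  by move=> k /negbTE ->; rewrite mul0r.
move=> k _; case: (k =P h) => [-> _|_]; last by rewrite mulr0n eqxx.
by move: degh; rewrite /deg msize1; lia.
Qed.

End HRepresentation.

Section SpanOfMonomials.
Variables (F : idomainType) (s : nat) (A : {fset 'X_{1..s}}).
Implicit Types p q : {mpoly F[s]}.

Lemma inPi0 : inPi A (0 : {mpoly F[s]}).
Proof. by move=> m; rewrite msupp0. Qed.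

Lemma inPiD p q : inPi A p -> inPi A q -> inPi A (p + q).
Proof. by move=> Ap Aq m /msuppD_le; rewrite mem_cat => /orP[/Ap|/Aq]. Qed.

Lemma inPiB p q : inPi A p -> inPi A q -> inPi A (p - q).
Proof. by move=> Ap Aq m /msuppB_le; rewrite mem_cat => /orP[/Ap|/Aq]. Qed.

Lemma inPiZ c p : inPi A p -> inPi A (c *: p).
Proof. by move=> Ap m /msuppZ_le /Ap. Qed.

Lemma inPiX m : m \in A -> inPi A ('X_[m] : {mpoly F[s]}).
Proof. by move=> mA k; rewrite msuppX inE => /eqP ->. Qed.

Lemma inPi_sum (I : Type) (r : seq I) (P : pred I) (G : I -> {mpoly F[s]}) :
  (forall i, P i -> inPi A (G i)) -> inPi A (\sum_(i <- r | P i) G i).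
Proof. by move=> AG; apply: big_ind => //; [apply: inPi0 | apply: inPiD]. Qed.

Lemma mem_border m j :
  m \in A -> (m + U_(j))%MM \notin A -> (m + U_(j))%MM \in border A.
Proof.
by move=> mA mjA; rewrite in_fsetD mjA; apply/imfset2P; exists m => //; exists j.
Qed.

End SpanOfMonomials.

Lemma evalptB (F : comNzRingType) (s : nat) (p r : {mpoly F[s]}) (x : 'rV[F]_s) :
  evalpt (p - r) x = evalpt p x - evalpt r x.
Proof. exact: mevalB. Qed.

Section InterpolationRemainders.
Variables (F : idomainType) (s : nat) (X : seq 'rV[F]_s).
Variables (A : {fset 'X_{1..s}}) (L : {mpoly F[s]} -> {mpoly F[s]}).
Hypothesis X_neq0 : X != [::].
Hypothesis interpA : deg_red_interp_space A X.
Hypothesis L_inPi : forall p, inPi A (L p).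
Hypothesis L_interp : forall p x, x \in X -> evalpt (L p) x = evalpt p x.

Local Notation q a := ('X_[a] - L 'X_[a]).
Local Notation H := [seq q a | a <- enum_fset (border A)].

Lemma inPi_vanishing_eq0 r : inPi A r -> vanishing_ideal X r -> r = 0.
Proof.
move=> Ar r0; have [p [_ _ uniq_p _]] := interpA 0.
rewrite (uniq_p r Ar); last by move=> x xX; rewrite r0 // /evalpt meval0.
by apply/esym/uniq_p => [|x xX]; [apply: inPi0 | rewrite /evalpt !meval0].
Qed.

Lemma msize_interp p : (msize (L p) <= msize p)%N.
Proof.
have [p' [_ _ uniq_p' degp']] := interpA p.
by rewrite (uniq_p' _ (@L_inPi p) (L_interp p)) -deg_leE.
Qed.

Lemma mnm0_in_A : 0%MM \in A.
Proof.
have [p [Ap interp_p _ degp]] := interpA 1.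
move: degp; rewrite deg_leE msize1 => /msize1_polyC p_const.
case: X X_neq0 interp_p => // x X' _ /(_ x (mem_head _ _)).
by rewrite p_const /evalpt !mevalC => p0; apply: Ap; rewrite mcoeff_msupp p0 oner_eq0.
Qed.

Lemma remainder_vanishing a : vanishing_ideal X (q a).
Proof. by move=> x xX; rewrite evalptB L_interp // subrr. Qed.

Lemma deg_remainder a : deg (q a) <= (mdeg a)%:Z.
Proof.
have : (msize (q a) <= msize ('X_[a] : {mpoly F[s]}))%N.
  by rewrite (leq_trans (msizeD_le _ _)) // geq_max msizeN msize_interp andbT.
by rewrite msizeX /deg; lia.
Qed.

Lemma Hrep_remainder_border n a : a \in border A -> (mdeg a)%:Z <= n -> Hrep H n (q a).
Proof.
by move=> aB le_an; apply: Hrep_mem; [apply: map_f | have := deg_remainder a; lia].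
Qed.

Lemma Hrep_vanishing n p : Hrep H n p -> vanishing_ideal X p.
Proof.
move=> [g [-> _]] x xX; rewrite /evalpt raddf_sum /= big1_seq // => h.
rewrite mem_undup => /andP[_ /mapP[a _ ->]].
by rewrite mevalM [X in _ * X]remainder_vanishing ?mulr0.
Qed.

Lemma Hrep_eq_modPi n p r :
  vanishing_ideal X p -> Hrep H n r -> inPi A (p - r) -> Hrep H n p.
Proof.
move=> p0 Hr Apr; suff /eqP : p - r = 0 by rewrite subr_eq0 => /eqP ->.
apply: inPi_vanishing_eq0 => // x xX.
by rewrite evalptB p0 // (Hrep_vanishing Hr) // subr0.
Qed.

Lemma Hrep_remainder_shift c j :
  Hrep H (mdeg c) (q c) -> Hrep H (mdeg c).+1 (q (c + U_(j))%MM).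
Proof.
move=> Hc; set b := (c + U_(j))%MM; set Lc := L 'X_[c].
have mdeg_b : mdeg b = (mdeg c).+1 by rewrite mdegD mdeg1 addn1.
have xj_xc : 'X_[U_(j)] * 'X_[c] = 'X_[b] :> {mpoly F[s]} by rewrite /b mpolyXD mulrC.
set T := \sum_(d <- msupp Lc) Lc@_d *: (if (d + U_(j))%MM \in A then 0 else q (d + U_(j))%MM).
set E := \sum_(d <- msupp Lc) Lc@_d *:
  (if (d + U_(j))%MM \in A then 'X_[(d + U_(j))%MM] else L 'X_[(d + U_(j))%MM]).
have xj_Lc : 'X_[U_(j)] * Lc = T + E.
  rewrite {1}(mpolyE Lc) mulr_sumr -big_split /=; apply: eq_bigr => d _.
  rewrite -scalerAr -scalerDr mulrC -mpolyXD.
  by case: ifP => _; rewrite ?add0r // subrK.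
have HT : Hrep H (mdeg b) T.
  rewrite /T big_seq; apply: Hrep_sum => d dLc; apply: HrepZ.
  case: ifP => djA; first exact: Hrep0.
  apply: Hrep_remainder_border; first by apply: mem_border; [apply: L_inPi dLc | rewrite djA].
  have := msize_mdeg_lt dLc; have := msize_interp 'X_[c].
  by rewrite msizeX mdeg_b mdegD mdeg1 -/Lc; lia.
have HxjT : Hrep H (mdeg b) ('X_[U_(j)] * q c + T).
  apply: HrepD HT; rewrite mdeg_b -addn1 PoszD.
  by apply: HrepMl Hc; rewrite degX mdeg1.
rewrite -mdeg_b; apply: (Hrep_eq_modPi _ HxjT); first exact: remainder_vanishing.
have -> : q b - ('X_[U_(j)] * q c + T) = E - L 'X_[b].
  by rewrite mulrBr xj_xc -/Lc xj_Lc; ring.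
apply: inPiB (@L_inPi _); apply: inPi_sum => d _; apply: inPiZ.
by case: ifP => djA; [apply: inPiX | apply: L_inPi].
Qed.

Lemma outside_border_pred b :
  b \notin A -> b \notin border A -> exists c j, b = (c + U_(j))%MM /\ c \notin A.
Proof.
move=> bA bB; have [j bj] : exists j, (0 < b j)%N.
  have [/existsP //|/existsPn b0] := boolP [exists j, (0 < b j)%N].
  suff b_eq0 : b = 0%MM by rewrite b_eq0 mnm0_in_A in bA.
  by apply/mnmP => i; rewrite mnm0E; move: (b0 i); lia.
pose c := [multinom (b i - (j == i))%N | i < s].
have bc : b = (c + U_(j))%MM.
  by apply/mnmP => i; rewrite mnmDE mnmE mnm1E; case: (j =P i) => [<-|_] /=; lia.
exists c, j; split=> //; apply: contra bB => cA.
by rewrite bc mem_border // -bc.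
Qed.

Lemma Hrep_remainder b : b \notin A -> Hrep H (mdeg b) (q b).
Proof.
elim: {b}(mdeg b).+1 {-2}b (ltnSn (mdeg b)) => // k IHk b lt_bk bA.
have [bB|bB] := boolP (b \in border A); first exact: Hrep_remainder_border.
have [c [j [bc cA]]] := outside_border_pred bA bB; subst b.
move: lt_bk; rewrite mdegD mdeg1 addn1 ltnS => lt_ck.
exact/Hrep_remainder_shift/IHk.
Qed.

Lemma remainders_Hbasis : is_Hbasis (vanishing_ideal X) H.
Proof.
split=> [_ /mapP[a _ ->]|p p0]; first exact: remainder_vanishing.
set Q := \sum_(m <- msupp p) p@_m *: (if m \in A then 0 else q m).
apply: (@Hrep_eq_modPi _ _ Q p0).
  rewrite /Q big_seq; apply: Hrep_sum => m mp; apply: HrepZ.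
  case: ifP => mA; first exact: Hrep0.
  exact: Hrep_le (deg_msupp mp) (Hrep_remainder (negbT mA)).
rewrite {1}(mpolyE p) /Q -sumrB; apply: inPi_sum => m _; rewrite -scalerBr; apply: inPiZ.
by case: ifP => mA; [rewrite subr0; apply: inPiX | rewrite opprB addrC subrK].
Qed.

End InterpolationRemainders.

Theorem lemma36 (R : realType) (s : nat) (X : seq 'rV[R[i]]_s)
  (A : {fset 'X_{1..s}}) (L : {mpoly R[i][s]} -> {mpoly R[i][s]}) :
  X != [::] ->
  deg_red_interp_space A X ->
  (forall p, inPi A (L p) /\ (forall x, x \in X -> evalpt (L p) x = evalpt p x)) ->
  is_Hbasis (vanishing_ideal X)
    [seq ('X_[alpha] - L 'X_[alpha]) | alpha <- enum_fset (border A)].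
Proof.
move=> X_neq0 interpA HL.
exact: remainders_Hbasis X_neq0 interpA (fun p => (HL p).1) (fun p => (HL p).2).
Qed.
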